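(* Let $\mathcal G$ encode a fine mixed subdivision of $n\Delta^{d-1}$ with $n\ge2$, and let $t$ be a lattice point of $(n-2)\Delta^{d-1}$. Then the intersection $\bigcap_{\bar j\in[\bar d]}C(\mathbb T(t+e_{\bar j}))$ of the $d$ cells with positions $t+e_{\bar j}$ consists of exactly one point, and this point is a lattice point.
   Context: Fix positive integers $n,d$; $K_{n,d}$ is the complete bipartite graph with left vertices $[n]$ and right vertices $[\bar d]=\{\bar1,\dots,\bar d\}$; graphs are identified with edge sets; $RD$ denotes the vector of right-vertex degrees, $\mathbf 1$ the all-ones vector in $\mathbb Z^{[\bar d]}$, $e_{\bar j}$ the standard unit vectors of $\mathbb R^d=\mathbb R^{[\bar d]}$; lattice points of $k\Delta^{d-1}$ are vectors in $\mathbb Z_{\ge0}^{[\bar d]}$ with sum $k$. Two acyclic subgraphs are compatible if whenever both contain a perfect matching between the same $I\subseteq[n]$, $\bar J\subseteq[\bar d]$, these matchings coincide. For a subgraph $G$ of $K_{n,d}$ in which every left vertex has positive degree, its cell is the polytope $C(G)=\sum_{i=1}^n\mathrm{conv}\{e_{\bar j}:(i,\bar j)\in G\}\subseteq\mathbb R^d$ (Minkowski sum). A collection $\mathcal G$ of subgraphs of $K_{n,d}$ encodes a fine mixed subdivision of $n\Delta^{d-1}$ (into the cells $C(G)$, $G\in\mathcal G$) if: every $G\in\mathcal G$ is a spanning tree of $K_{n,d}$; (tree linkage) for each $G\in\mathcal G$ and each edge $e\in G$ not incident to a leaf, there are $G'\in\mathcal G$, $G'\neq G$, and $e'\in G'$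 with $G\setminus e=G'\setminus e'$; (compatibility) any two trees of $\mathcal G$ are compatible. It is known that then for each lattice point $u$ of $(n-1)\Delta^{d-1}$ there is exactly one tree $\mathbb T(u)\in\mathcal G$ with $RD(\mathbb T(u))=u+\mathbf 1$ (the cell of position $u$), and these are all the trees of $\mathcal G$. *)

From HB Require Import structures.
From mathcomp Require Import all_boot all_order all_algebra.
Set Implicit Arguments. Unset Strict Implicit. Unset Printing Implicit Defensive.
Import Order.TTheory GRing.Theory Num.Theory.

(* Subgraphs of K_{n,d}: left vertices 'I_n, right vertices 'I_d (= [\bar d]),
   a graph is its edge set. *)
Definition edge (n d : nat) := ('I_n * 'I_d)%type.
Definition graph (n d : nat) := {set edge n d}.

Definition vert (n d : nat) := ('I_n + 'I_d)%type.

Definition adj (n d : nat) (G : graph n d) : rel (vert n d) :=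
  fun u v => match u, v with
             | inl i, inr j => (i, j) \in G
             | inr j, inl i => (i, j) \in G
             | _, _ => false
             end.

Definition acyclic (n d : nat) (G : graph n d) : Prop :=
  forall s : seq (vert n d), uniq s -> 3 <= size s -> ~~ cycle (adj G) s.

Definition connected (n d : nat) (G : graph n d) : Prop :=
  forall u v : vert n d, connect (adj G) u v.

Definition spanning_tree (n d : nat) (G : graph n d) : Prop :=
  connected G /\ acyclic G.

Definition ldeg (n d : nat) (G : graph n d) (i : 'I_n) : nat :=
  #|[set j : 'I_d | (i, j) \in G]|.
Definition rdeg (n d : nat) (G : graph n d) (j : 'I_d) : nat :=
  #|[set i : 'I_n | (i, j) \in G]|.

Definition RD (n d : nat) (G : graph n d) : 'I_d -> nat := rdeg G.

Definition incident_to_leaf (n d : nat) (G : graph n d) (e : edge n d) : bool :=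
  (ldeg G e.1 == 1) || (rdeg G e.2 == 1).

Definition perfect_matching (n d : nat) (I : {set 'I_n}) (J : {set 'I_d})
  (M : graph n d) : Prop :=
  [/\ forall e, e \in M -> (e.1 \in I) && (e.2 \in J),
      forall i, i \in I -> #|[set j : 'I_d | (i, j) \in M]| = 1 &
      forall j, j \in J -> #|[set i : 'I_n | (i, j) \in M]| = 1].

Definition compatible (n d : nat) (G G' : graph n d) : Prop :=
  forall (I : {set 'I_n}) (J : {set 'I_d}) (M M' : graph n d),
    M \subset G -> M' \subset G' ->
    perfect_matching I J M -> perfect_matching I J M' -> M = M'.

Definition encodes_fms (n d : nat) (GG : {set graph n d}) : Prop :=
  [/\ forall G, G \in GG -> spanning_tree G,
      forall G e, G \in GG -> e \in G -> ~~ incident_to_leaf G e ->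
        exists G', exists e',
          [/\ G' \in GG, G' != G, e' \in G' & G :\ e = G' :\ e'] &
      forall G G', G \in GG -> G' \in GG -> compatible G G'].

(* membership in the cell C(G) = sum_i conv{e_j : (i,j) in G} (Minkowski sum),
   written out: x = sum_i p_i with p_i = sum_j lam i j e_j a convex
   combination of the e_j, (i,j) in G. *)
Definition in_cell (R : realFieldType) (n d : nat) (G : graph n d)
  (x : 'rV[R]_d) : Prop :=
  exists lam : 'I_n -> 'I_d -> R,
    [/\ forall i j, (0 <= lam i j)%R,
        forall i j, (i, j) \notin G -> lam i j = 0,
        forall i, (\sum_(j < d) lam i j = 1)%R &
        forall j, x ord0 j = \sum_(i < n) lam i j]%R.

Definition lattice_pt (d k : nat) (u : 'I_d -> nat) : Prop :=
  \sum_(j < d) u j = k.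

Definition add_unit (d : nat) (u : 'I_d -> nat) (j : 'I_d) : 'I_d -> nat :=
  fun k => u k + (k == j).

From HB Require Import structures.
From mathcomp Require Import all_boot all_order all_algebra.
From mathcomp Require Import zify.
Import Order.TTheory GRing.Theory Num.Theory.
Set Implicit Arguments. Unset Strict Implicit. Unset Printing Implicit Defensive.

(* Two cells A = T(t + e_a) and B = T(t + e_b) satisfy RD(A) + e_b = RD(B) + e_a.
   Orient the edges of A from left to right and those of B from right to left.
   By compatibility there is no directed cycle of length at least 3 (its A-edges
   and its B-edges would be two different perfect matchings of the same vertices),
   so an arc whose head reaches its tail is reversed by another arc: it is an
   edge common to A and B.  Counting edges over vertex sets closed under
   reachability, a connected graph with n + d - 1 edges inducing fewer than |S|
   edges on any proper S, shows that the right vertex b reaches every vertex.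
   It follows that every left vertex i is a leaf of T(t + e_(sigma i)) attached
   to sigma i, and that the edge (i, sigma i) lies in every cell T(t + e_j).
   Hence the lattice point sum_i e_(sigma i) lies in all d cells; conversely a
   point y of all of them has y_k >= #|sigma^-1(k)| (read off in the cell
   T(t + e_k)), and both coordinate sums equal n, so y is that lattice point. *)

Lemma prev_at_last (T : eqType) (x z : T) s :
  x \notin s -> prev_at x x z s = last z s.
Proof.
elim: s z => [|y s IH] z /=; first by rewrite eqxx.
by rewrite inE negb_or => /andP[/negbTE -> /IH].
Qed.

Lemma next_neq_prev (T : eqType) (c : seq T) x :
  uniq c -> 2 < size c -> x \in c -> next c x != prev c x.
Proof.
move=> Uc Sc xc; case/rot_to: xc => i s Hrot.
rewrite -(next_rot i Uc) -(prev_rot i Uc) Hrot.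
have : uniq (x :: s) by rewrite -Hrot rot_uniq.
have : 2 < size (x :: s) by rewrite -Hrot size_rot.
case: s {Hrot} => [|y [|z s]] //= _.
rewrite !inE !negb_or => /andP[/and3P[xy xz xs] /andP[yzs _]].
rewrite /next /prev /= !eqxx /= (negbTE xy) (negbTE xz) prev_at_last //.
apply/eqP => Hy; move: yzs; rewrite Hy.
have := mem_last z s; rewrite inE => /orP[/eqP->|->]; first by rewrite eqxx.
by rewrite andbF.
Qed.

Section Arcs.
Variables n d : nat.
Local Notation V := (vert n d).
Implicit Types (A B : graph n d) (c : seq V).

Definition arc A B : rel V := fun u v =>
  match u, v with
  | inl i, inr j => (i, j) \in A
  | inr j, inl i => (i, j) \in B
  | _, _ => false
  end.

Lemma arcC A B u v : arc B A u v = arc A B v u.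
Proof. by case: u; case: v. Qed.

Lemma arc_irr A B u : arc A B u u = false.
Proof. by case: u. Qed.

Definition next_matching c : graph n d :=
  [set e | (inl e.1 \in c) && (next c (inl e.1) == inr e.2)].

Lemma next_matching_sub A B c : cycle (arc A B) c -> next_matching c \subset A.
Proof.
move=> Cc; apply/subsetP => -[i j]; rewrite inE /= => /andP[ic /eqP Nij].
by have := next_cycle Cc ic; rewrite Nij.
Qed.

Lemma next_matching_perfect A B c : uniq c -> cycle (arc A B) c ->
  perfect_matching [set i | inl i \in c] [set j | inr j \in c] (next_matching c).
Proof.
move=> Uc Cc; split.
- by move=> [i j]; rewrite !inE /= => /andP[ic /eqP <-]; rewrite ic mem_next.
- move=> i; rewrite inE => ic; have := next_cycle Cc ic.
  case Ni: (next c (inl i)) => [//|j] _.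
  suff -> : [set j' | (i, j') \in next_matching c] = [set j] by rewrite cards1.
  by apply/setP => j'; rewrite !inE /= ic Ni eq_sym.
- move=> j; rewrite inE => jc; have := prev_cycle Cc jc.
  case Pj: (prev c (inr j)) => [i|//] _.
  suff -> : [set i' | (i', j) \in next_matching c] = [set i] by rewrite cards1.
  apply/setP => i'; rewrite !inE /=; apply/andP/eqP => [[_ /eqP Ni']|->].
    by move: Pj; rewrite -Ni' prev_next // => -[].
  by rewrite -Pj mem_prev jc next_prev.
Qed.

Lemma compatible_arc_cycle A B c :
  compatible A B -> uniq c -> cycle (arc A B) c -> size c <= 2.
Proof.
move=> compAB Uc Cc; rewrite leqNgt; apply/negP => Sc.
have [i ic] : exists i, inl i \in c.
  case: c Sc Cc {Uc} => [//|[i|j] c'] _ Cc; first by exists i; rewrite mem_head.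
  have := next_cycle Cc (mem_head _ _); have := mem_next (inr j :: c') (inr j).
  by rewrite mem_head; case: next => [i|//] ic _; exists i.
have Crev : cycle (arc B A) (rev c) by rewrite rev_cycle -(eq_cycle (@arcC B A)).
have Urev : uniq (rev c) by rewrite rev_uniq.
(* Around c, the A-edges leaving the left vertices and, read along [rev c], the
   B-edges entering them are perfect matchings between the same vertex sets. *)
have PM := next_matching_perfect Uc Cc.
have PMrev := next_matching_perfect Urev Crev.
rewrite (eq_finset _ (fun i => mem_rev c (inl i))) in PMrev.
rewrite (eq_finset _ (fun j => mem_rev c (inr j))) in PMrev.
have EM := compAB _ _ _ _ (next_matching_sub Cc) (next_matching_sub Crev) PM PMrev.
have := next_cycle Cc ic; case Ni: (next c (inl i)) => [//|k] _.
have : (i, k) \in next_matching (rev c) by rewrite -EM inE /= ic Ni eqxx.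
rewrite inE /= mem_rev ic next_rev // => /eqP Pi.
by move: (next_neq_prev Uc Sc ic); rewrite Ni Pi eqxx.
Qed.

Lemma compatible_arc_sym A B v w : compatible A B ->
  arc A B v w -> connect (arc A B) w v -> arc A B w v.
Proof.
move=> compAB Hvw /connectP[p Hp Hl]; case/shortenP: Hp Hl => p' Hp' Up' _ Hl.
have Cc : cycle (arc A B) (w :: p') by rewrite /= rcons_path Hp' -Hl Hvw.
have := compatible_arc_cycle compAB Up' Cc.
case: p' Hp' {Up' Cc} Hl => [|y [|//]] /= Hp' Hl _.
  by move: Hvw; rewrite Hl arc_irr.
by move: Hp'; rewrite Hl andbT.
Qed.

End Arcs.

Section EdgeCounting.
Variables n d : nat.
Local Notation V := (vert n d).
Implicit Types (G : graph n d) (S : {set V}).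

Definition touching G S := [set e in G | (inl e.1 \in S) || (inr e.2 \in S)].
Definition induced G S := [set e in G | (inl e.1 \in S) && (inr e.2 \in S)].

Lemma connected_crossing G S u w : connected G -> u \in S -> w \notin S ->
  exists2 e, e \in G & (inl e.1 \in S) != (inr e.2 \in S).
Proof.
move=> HG uS wS; apply/exists_inP; apply: contraTT (HG u w) => /exists_inPn Hno.
have Hcl : closed (adj G) S.
  by move=> [i|j] [i'|j'] //= e; have /negbNE/eqP/= -> := Hno _ e.
by apply/negP => /(closed_connect Hcl); rewrite uS (negbTE wS).
Qed.

Lemma connected_left_edge G i (j : 'I_d) : connected G -> exists k, (i, k) \in G.
Proof.
move=> HG; have jS : inr j \notin [set inl i : vert n d] by rewrite inE.
have [[i' k] e] := connected_crossing HG (set11 (inl i)) jS.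
rewrite !inE; have [[<-]|_] := eqVneq (inl i' : vert n d) (inl i); first by exists k.
by have [|] := eqVneq (inr k : vert n d) (inl i).
Qed.

Lemma card_touching_ge G S : connected G -> S != set0 -> S != setT ->
  #|S| <= #|touching G S|.
Proof.
move=> HG; have [k] := ubnP #|S|; elim: k S => // k IH S /ltnSE leSk S0 ST.
have [u uS] := set0Pn _ S0; have /properP[_ [w _ wS]] : S \proper setT by rewrite properT.
have [[i j] eG /= ne] := connected_crossing HG uS wS.
have [x xS ex] : exists2 x, x \in S &
    ((i, j) \in touching G S) && ((i, j) \notin touching G (S :\ x)).
  move: ne; case iS: (inl i \in S); case jS: (inr j \in S) => // _.
    by exists (inl i); rewrite // !inE eG iS jS eqxx.
  by exists (inr j); rewrite // !inE eG iS jS eqxx.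
have lt_touch : #|touching G (S :\ x)| < #|touching G S|.
  apply: proper_card; apply/properP; split; last by exists (i, j); case/andP: ex.
  by apply/subsetP => f; rewrite !inE => /andP[-> /orP[] /andP[_ ->]]; rewrite ?orbT.
have cardS : #|S| = #|S :\ x|.+1 by rewrite (cardsD1 x) xS.
have [S'0|S'0] := eqVneq (S :\ x) set0.
  by rewrite cardS S'0 cards0 (leq_ltn_trans _ lt_touch).
have S'T : S :\ x != setT by apply/eqP => S'T; have := setD11 x S; rewrite S'T inE.
have le' : #|S :\ x| <= #|touching G (S :\ x)| by apply: IH; rewrite // -ltnS -cardS.
by rewrite cardS (leq_ltn_trans le' lt_touch).
Qed.

Definition connected_tree G := connected G /\ #|G| = (n + d).-1.

Lemma card_induced_lt G S : connected_tree G ->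
  S != set0 -> S != setT -> #|induced G S| < #|S|.
Proof.
move=> [HG cardG] S0 ST.
have splitG : #|G| = #|induced G S| + #|touching G (~: S)|.
  rewrite -(cardID [pred e | (inl e.1 \in S) && (inr e.2 \in S)] G).
  by congr (_ + _); apply: eq_card => e; rewrite !inE // negb_and andbC.
have C0 : ~: S != set0 by rewrite -setCT (can_eq setCK).
have CT : ~: S != setT by rewrite -setC0 (can_eq setCK).
have := card_touching_ge HG C0 CT; have := cardsC S; have := card_gt0 S.
rewrite S0 card_sum !card_ord; lia.
Qed.

Lemma card_edges_right G (P : pred 'I_d) :
  #|[set e in G | P e.2]| = \sum_(k | P k) rdeg G k.
Proof.
rewrite -sum1_card big_mkcond (eq_bigr (fun e => ((e.1, e.2) \in G) && P e.2 : nat)).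
  rewrite -(pair_bigA _ (fun i k => ((i, k) \in G) && P k : nat)) exchange_big /=.
  rewrite [RHS]big_mkcond; apply: eq_bigr => k _ /=.
  case: (P k); last by rewrite big1 // => i _; rewrite andbF.
  by rewrite /rdeg -sum1_card [RHS]big_mkcond; apply: eq_bigr => i _; rewrite inE andbT.
by move=> [i k] _; rewrite inE.
Qed.

Lemma card_rdeg G : #|G| = \sum_k rdeg G k.
Proof. by rewrite -card_edges_right; apply: eq_card => e; rewrite !inE andbT. Qed.

End EdgeCounting.

Lemma sum_pred1_cond (d : nat) (P : pred 'I_d) b :
  \sum_(k | P k) ((k == b) : nat) = P b.
Proof.
case Pb: (P b); first by rewrite (bigD1 b) //= eqxx big1 // => k /andP[_ /negbTE ->].
by rewrite big1 // => k Pk; case: eqP => // kb; rewrite -kb Pk in Pb.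
Qed.

Lemma card_arc_closed_le n d (A B : graph n d) (a b : 'I_d) (S : {set vert n d}) :
  (forall k, rdeg B k + (k == b) = rdeg A k + (k == a)) -> connected A ->
  S != set0 -> S != setT -> (forall v w, arc A B v w -> v \in S -> w \in S) ->
  #|S| + (inr a \in S) <= #|induced B S| + (inr b \in S).
Proof.
move=> rdegBA connA S0 ST closedS.
have inducedE : #|induced B S| = \sum_(k | inr k \in S) rdeg B k.
  rewrite -card_edges_right; apply: eq_card => -[i j]; rewrite !inE /=.
  case eB: ((i, j) \in B); case jS: (inr j \in S); rewrite ?andbF //=.
  by rewrite (closedS (inr j) (inl i)).
have touchingE : #|touching A S| = \sum_(k | inr k \in S) rdeg A k.
  rewrite -card_edges_right; apply: eq_card => -[i j]; rewrite !inE /=.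
  case eA: ((i, j) \in A); case iS: (inl i \in S) => //=.
  by rewrite (closedS (inl i) (inr j)).
have sumE : \sum_(k | inr k \in S) (rdeg B k + (k == b)) =
            \sum_(k | inr k \in S) (rdeg A k + (k == a)) by apply: eq_bigr.
rewrite !big_split /= !sum_pred1_cond -inducedE -touchingE in sumE.
by rewrite sumE leq_add2r card_touching_ge.
Qed.

Section TwoCells.
Variables (n d : nat) (A B : graph n d) (a b : 'I_d).
Hypotheses (treeA : connected_tree A) (treeB : connected_tree B) (compAB : compatible A B)
  (rdegAB : forall k, rdeg A k + (k == b) = rdeg B k + (k == a)).

Lemma connect_from_b v : connect (arc A B) (inr b) v.
Proof.
pose S := [set u | connect (arc A B) u v].
have [ST|ST] := eqVneq S setT; first by have := in_setT (inr b : vert n d); rewrite -ST inE.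
have S0 : S != set0 by apply/set0Pn; exists v; rewrite inE connect0.
have closedS x y : arc B A x y -> x \in S -> y \in S.
  by rewrite arcC !inE => yx; apply: connect_trans (connect1 yx).
suff : inr b \in S by rewrite inE.
have := card_arc_closed_le rdegAB treeB.1 S0 ST closedS.
have := card_induced_lt treeA S0 ST.
by case: (inr b \in S); case: (inr a \in S) => //=; lia.
Qed.

Lemma edge_b_in_B i : (i, b) \in A -> (i, b) \in B.
Proof.
move=> ebA.
exact: (compatible_arc_sym (v := inl i) (w := inr b) compAB ebA (connect_from_b _)).
Qed.

Lemma edgeB_in_A i k : (i, b) \in A -> (i, k) \in B -> (i, k) \in A.
Proof.
move=> ebA ekB; apply: (compatible_arc_sym (v := inr k) (w := inl i) compAB ekB).
exact: connect_trans (connect1 (ebA : arc A B (inl i) (inr b))) (connect_from_b _).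
Qed.

Lemma exists_common_edge i : exists2 k, (i, k) \in A & (i, k) \in B.
Proof.
case: (boolP [exists k, ((i, k) \in A) && ((i, k) \in B)]) => [/existsP[k /andP[]]|];
  first by exists k.
move=> /existsPn noCommon; exfalso.
(* The vertices reachable from i contain an A-neighbour but no B-neighbour of i,
   so removing i loses no induced B-edge, against [card_arc_closed_le]. *)
have [k kA] := connected_left_edge i b treeA.1.
have [m mB] := connected_left_edge i b treeB.1.
pose S := [set u | connect (arc A B) (inl i) u].
have notSB j : (i, j) \in B -> inr j \notin S.
  move=> jB; rewrite inE; apply/negP.
  move=> /(compatible_arc_sym (v := inr j) (w := inl i) compAB jB) /= jA.
  by move: (noCommon j); rewrite jA jB.
have closedS v w : arc A B v w -> v \in S -> w \in S.
  by rewrite !inE => vw iv; apply: connect_trans iv (connect1 vw).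
have iS : inl i \in S by rewrite inE connect0.
have kS : inr k \in S by rewrite inE connect1.
have mS := notSB m mB.
pose S' := S :\ inl i.
have S0 : S != set0 by apply/set0Pn; exists (inl i).
have ST : S != setT by apply/eqP => ST; rewrite ST inE in mS.
have S'0 : S' != set0 by apply/set0Pn; exists (inr k); rewrite in_setD1 kS.
have S'T : S' != setT.
  by apply/eqP => S'T; move: (in_setT (inr m : vert n d)); rewrite -S'T in_setD1 (negbTE mS).
have inducedE : induced B S = induced B S'.
  apply/setP => -[i' j']; rewrite !inE /=.
  have [[->]|//] := eqVneq (inl i' : vert n d) (inl i).
  case eB: ((i, j') \in B) => //=.
  by move: (notSB _ eB); rewrite inE => /negbTE ->; rewrite andbF.
have rdegBA k' : rdeg B k' + (k' == a) = rdeg A k' + (k' == b) by rewrite rdegAB.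
have := card_arc_closed_le rdegBA treeA.1 S0 ST closedS.
have := card_induced_lt treeB S'0 S'T.
have : #|S| = #|S'|.+1 by rewrite (cardsD1 (inl i)) iS.
rewrite inducedE; move: #|S| #|S'| #|induced B S'| => s s' e.
by case: (inr a \in S); case: (inr b \in S) => /=; lia.
Qed.

End TwoCells.

Lemma no_crossing_edges n d (A B : graph n d) (a b : 'I_d) i :
  connected_tree A -> connected_tree B -> compatible A B ->
  (forall k, rdeg A k + (k == b) = rdeg B k + (k == a)) ->
  a != b -> (i, b) \in A -> (i, a) \notin B.
Proof.
move=> treeA treeB compAB rdegAB ab ebA; apply/negP => eaB.
have rdegBA k : rdeg B k + (k == a) = rdeg A k + (k == b) by rewrite rdegAB.
have to_a u : connect (arc A B) u (inr a).
  rewrite (eq_connect (e' := [rel x y | arc B A y x]) (fun x y => esym (arcC _ _ y x))).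
  rewrite connect_rev.
  exact: connect_from_b treeB treeA rdegBA u.
have a_to_b : connect (arc A B) (inr a) (inr b).
  apply: connect_trans (connect1 (eaB : arc A B (inr a) (inl i))) _.
  exact: connect1 (ebA : arc A B (inl i) (inr b)).
have strong u v : connect (arc A B) u v.
  exact: connect_trans (to_a u) (connect_trans a_to_b (connect_from_b treeA treeB rdegAB v)).
have subAB : A \subset B.
  apply/subsetP => -[l r] e.
  exact: (compatible_arc_sym (v := inl l) (w := inr r) compAB e (strong _ _)).
have := rdegAB a; rewrite eqxx (negbTE ab) addn0 addn1 => rdegAa.
have : rdeg A a <= rdeg B a.
  by apply: subset_leq_card; apply/subsetP => l; rewrite !inE; apply: (subsetP subAB).
by rewrite rdegAa ltnn.
Qed.

Lemma exists_common_leaf_edge n d (T : 'I_d -> graph n d) (j0 : 'I_d) :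
  (forall j, connected_tree (T j)) -> (forall j l, compatible (T j) (T l)) ->
  (forall j l k, rdeg (T j) k + (k == l) = rdeg (T l) k + (k == j)) ->
  forall i, exists j, (forall k, (i, k) \in T j -> k = j) /\ (forall l, (i, j) \in T l).
Proof.
move=> treeT compT rdegT i.
have shared j k : (i, k) \in T j -> (i, k) \in T k.
  exact: (edge_b_in_B (treeT j) (treeT k) (compT j k) (rdegT j k)).
have [k0 ik0] := connected_left_edge i j0 (treeT j0).1.
pose N j := #|[set k | (i, k) \in T j]|.
have [j ijj minN] := arg_minnP (P := fun j => (i, j) \in T j) N (shared _ _ ik0).
have leaf k : (i, k) \in T j -> k = j.
  move=> ikj; apply/eqP; apply: contraT => kj.
  have subN : [set m | (i, m) \in T k] \proper [set m | (i, m) \in T j].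
    apply/properP; split.
      apply/subsetP => m; rewrite !inE.
      exact: (edgeB_in_A (treeT j) (treeT k) (compT j k) (rdegT j k) ikj).
    exists j; rewrite !inE //.
    apply: no_crossing_edges (treeT j) (treeT k) (compT j k) (rdegT j k) _ ikj.
    by rewrite eq_sym.
  by move: (proper_card subN); rewrite ltnNge (minN _ (shared _ _ ikj)).
exists j; split => // l.
have [m iml imj] := exists_common_edge (treeT l) (treeT j) (compT l j) (rdegT l j) i.
by rewrite -(leaf m imj).
Qed.

Local Open Scope ring_scope.

Section CellGeometry.
Variables (R : realFieldType) (n d : nat).
Implicit Types (G : graph n d) (y : 'rV[R]_d) (sigma : 'I_n -> 'I_d).

Definition vertex_of sigma : 'rV[R]_d := \row_k #|[set i | sigma i == k]|%:R.

Lemma in_cell_sum G y : in_cell G y -> \sum_k y ord0 k = n%:R.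
Proof.
case=> lam [_ _ lam_sum1 yE]; rewrite (eq_bigr _ (fun k _ => yE k)) exchange_big /=.
by rewrite (eq_bigr _ (fun i _ => lam_sum1 i)) sumr_const card_ord.
Qed.

Lemma in_cell_vertex G sigma :
  (forall i, (i, sigma i) \in G) -> in_cell G (vertex_of sigma).
Proof.
move=> Gsigma; exists (fun i k => (sigma i == k)%:R); split.
- by move=> i k; rewrite ler0n.
- by move=> i k; apply: contraNeq; rewrite pnatr_eq0 eqb0 negbK => /eqP <-.
- move=> i; rewrite (bigD1 (sigma i)) //= eqxx big1 ?addr0 // => k.
  by rewrite eq_sym => /negbTE ->.
- move=> k; rewrite mxE -natr_sum -sum1_card big_mkcond /=.
  by congr _%:R; apply: eq_bigr => i _; rewrite inE.
Qed.

Lemma in_cell_ge G y (P : {pred 'I_n}) k :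
  (forall i j, i \in P -> (i, j) \in G -> j = k) -> in_cell G y -> #|P|%:R <= y ord0 k.
Proof.
move=> Pleaf [lam [lam_ge0 lam0 lam_sum1 yE]].
have lam1 i : i \in P -> lam i k = 1.
  move=> Pi; rewrite -(lam_sum1 i) (bigD1 k) //= big1 ?addr0 // => j jk.
  by apply: lam0; apply: contra jk => /(Pleaf _ _ Pi)/eqP.
rewrite yE (bigID (mem P)) /= (eq_bigr _ lam1) sumr_const lerDl.
exact: sumr_ge0.
Qed.

Lemma cells_meet_at_vertex (T : 'I_d -> graph n d) sigma :
  (forall i k, (i, k) \in T (sigma i) -> k = sigma i) ->
  (forall i l, (i, sigma i) \in T l) ->
  forall y, (forall j, in_cell (T j) y) <-> y = vertex_of sigma.
Proof.
move=> leaf common y; split => [Hy|-> j]; last exact: in_cell_vertex.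
have vertex_le k : vertex_of sigma ord0 k <= y ord0 k.
  rewrite mxE; apply: in_cell_ge (Hy k) => i j; rewrite inE => /eqP <-; exact: leaf.
apply/rowP => k; apply/eqP; rewrite -subr_eq0; apply/eqP.
have sum0 : \sum_k (y ord0 k - vertex_of sigma ord0 k) = 0.
  by rewrite sumrB (in_cell_sum (Hy k)) (in_cell_sum (in_cell_vertex (common^~ k))) subrr.
by apply: (psumr_eq0P _ sum0) => // k' _; rewrite subr_ge0.
Qed.

End CellGeometry.

Theorem mainTheorem13 (R : realFieldType) (n d : nat) (GG : {set graph n d})
  (t : 'I_d -> nat) (T : 'I_d -> graph n d) :
  (0 < d)%N -> (2 <= n)%N -> encodes_fms GG ->
  lattice_pt (n - 2) t ->
  (forall j, T j \in GG /\ (forall k, RD (T j) k = (add_unit t j k).+1)) ->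
  exists x : 'rV[R]_d,
    (forall y : 'rV[R]_d, (forall j, in_cell (T j) y) <-> y = x) /\
    (exists z : 'I_d -> int, forall j, x ord0 j = (z j)%:~R).
Proof.
move=> d_gt0 n_ge2 [treeGG _ compGG] sum_t HT.
have rdegT j k : rdeg (T j) k = (t k + (k == j)).+1 := (HT j).2 k.
have rdegTT j l k : (rdeg (T j) k + (k == l) = rdeg (T l) k + (k == j))%N.
  by rewrite !rdegT !addSn addnAC.
have compT j l : compatible (T j) (T l) := compGG _ _ (HT j).1 (HT l).1.
have treeT j : connected_tree (T j).
  split; first exact: (treeGG _ (HT j).1).1.
  rewrite card_rdeg (eq_bigr (fun k => t k + (k == j) + 1)%N) => [|k _]; last first.
    by rewrite rdegT addn1.
  rewrite !big_split /= sum_pred1_cond sum1_card card_ord sum_t; lia.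
have [sigma leaf_common] :=
  fin_all_exists (exists_common_leaf_edge (Ordinal d_gt0) treeT compT rdegTT).
exists (vertex_of R sigma); split.
  by apply: cells_meet_at_vertex => i; have [] := leaf_common i.
by exists (fun k => #|[set i | sigma i == k]|%:Z) => k; rewrite mxE.
Qed.
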